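(* Let $A\in\{0,1\}^{m\times m}$ and $B\in\{0,1\}^{n\times n}$ be non-degenerate and let $\varphi:X_A\to X_B$ be an elementary conjugacy. Define $R_\varphi\in\{0,1\}^{m\times n}$ and $S_\varphi\in\{0,1\}^{n\times m}$ by $(R_\varphi)_{a,b}=1$ iff there is $a'$ with $\varphi_{\mathrm{loc}}(a,a')=b$, and $(S_\varphi)_{b,a}=1$ iff there is $b'$ with $\varphi^{-1}_{\mathrm{loc}}(b,b')=a$. Then $R_\varphi S_\varphi=A$ and $S_\varphi R_\varphi=B$.
   Context: A matrix is non-degenerate if it has no zero rows or columns; products are integer matrix products. $X_A=\{x\in\{1,\dots,m\}^{\mathbb Z}:A_{x_\ell,x_{\ell+1}}=1\ \forall\ell\}$ with the left shift. A conjugacy is a shift-commuting homeomorphism. A conjugacy $\varphi:X_A\to X_B$ is elementary if there are maps $\varphi_{\mathrm{loc}}$ (on pairs $(a,a')$ with $A_{a,a'}=1$) and $\varphi^{-1}_{\mathrm{loc}}$ (on pairs $(b,b')$ with $B_{b,b'}=1$) such that $\varphi(x)_i=\varphi_{\mathrm{loc}}(x_i,x_{i+1})$ and $\varphi^{-1}(y)_i=\varphi^{-1}_{\mathrm{loc}}(y_{i-1},y_i)$ for all $x,y,i$; the existential quantifiers above range over such allowed pairs. *)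

From mathcomp Require Import all_boot all_order all_algebra.
Set Implicit Arguments. Unset Strict Implicit. Unset Printing Implicit Defensive.
Import GRing.Theory Num.Theory.
Local Open Scope ring_scope.

Definition config (m : nat) := int -> 'I_m.

Definition zero_one (p q : nat) (A : 'M[int]_(p, q)) : Prop :=
  forall i j, A i j = 0 \/ A i j = 1.

Definition nondeg_mx (m : nat) (A : 'M[int]_m) : Prop :=
  (forall i, exists j, A i j != 0) /\ (forall j, exists i, A i j != 0).

Definition inX (m : nat) (A : 'M[int]_m) (x : config m) : Prop :=
  forall l : int, A (x l) (x (l + 1)) = 1.

Definition shift (m : nat) (x : config m) : config m := fun i => x (i + 1).

(* continuity w.r.t. the product topology (of discrete alphabets) on X_A *)
Definition continuous_on (m n : nat) (A : 'M[int]_m)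
    (f : config m -> config n) : Prop :=
  forall x, inX A x -> forall N : nat, exists M : nat, forall y, inX A y ->
    (forall i : int, (absz i <= M)%N -> y i = x i) ->
    forall i : int, (absz i <= N)%N -> f y i = f x i.

Definition conjugacy (m n : nat) (A : 'M[int]_m) (B : 'M[int]_n)
    (phi : config m -> config n) (psi : config n -> config m) : Prop :=
  (forall x, inX A x -> inX B (phi x)) /\
  (forall y, inX B y -> inX A (psi y)) /\
  (forall x, inX A x -> forall i, psi (phi x) i = x i) /\
  (forall y, inX B y -> forall i, phi (psi y) i = y i) /\
  (forall x, inX A x -> forall i, phi (shift x) i = shift (phi x) i) /\
  continuous_on A phi /\ continuous_on B psi.

Definition elementary_rules (m n : nat) (A : 'M[int]_m) (B : 'M[int]_n)
    (phi : config m -> config n) (psi : config n -> config m)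
    (philoc : 'I_m -> 'I_m -> 'I_n) (psiloc : 'I_n -> 'I_n -> 'I_m) : Prop :=
  (forall x, inX A x -> forall i, phi x i = philoc (x i) (x (i + 1))) /\
  (forall y, inX B y -> forall i, psi y i = psiloc (y (i - 1)) (y i)).

Definition Rmat (m n : nat) (A : 'M[int]_m) (philoc : 'I_m -> 'I_m -> 'I_n)
  : 'M[int]_(m, n) :=
  \matrix_(a < m, b < n)
    (if [exists a' : 'I_m, (A a a' == 1) && (philoc a a' == b)] then 1 else 0).

Definition Smat (m n : nat) (B : 'M[int]_n) (psiloc : 'I_n -> 'I_n -> 'I_m)
  : 'M[int]_(n, m) :=
  \matrix_(b < n, a < m)
    (if [exists b' : 'I_n, (B b b' == 1) && (psiloc b b' == a)] then 1 else 0).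

From mathcomp Require Import all_boot all_order all_algebra zify.
Local Open Scope ring_scope.
Set Implicit Arguments. Unset Strict Implicit. Unset Printing Implicit Defensive.
Import GRing.Theory Num.Theory.

(* Every edge (a, c) of A lies on a point x of X_A, and reading phi x and
   psi (phi x) at times 0 and 1 shows that b = phi_loc(a, c) links a to c
   through R and S.  Conversely, if a -R-> b -S-> c, splice phi x (which passes
   through b at time 0) with a point of X_B following the S-witness edge out of
   b; since X_B is a one-step shift of finite type this is again a point of X_B,
   and since psi has memory one its image passes through a, then c.  Hence
   A a c = 1 and b = phi_loc(a, c), so (R S)_{a,c} = A_{a,c}.  The identity
   S R = B is the same statement for the inverse pair once both codes are
   shifted by one coordinate, which swaps memory and anticipation. *)

Definition next_state m (A : 'M[int]_m) (i : 'I_m) : 'I_m :=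
  odflt i [pick j | A i j == 1].

Definition prev_state m (A : 'M[int]_m) (j : 'I_m) : 'I_m :=
  odflt j [pick i | A i j == 1].

Section Paths.
Variables (m : nat) (A : 'M[int]_m).
Hypotheses (zA : zero_one A) (nA : nondeg_mx A).

Lemma next_stateP i : A i (next_state A i) = 1.
Proof.
rewrite /next_state; case: pickP => [j /eqP // | noj].
have [j /negPf Aij] := nA.1 i.
case: (zA i j) => Eij; first by rewrite Eij in Aij.
by move: (noj j); rewrite Eij eqxx.
Qed.

Lemma prev_stateP j : A (prev_state A j) j = 1.
Proof.
rewrite /prev_state; case: pickP => [i /eqP // | noi].
have [i /negPf Aij] := nA.2 j.
case: (zA i j) => Eij; first by rewrite Eij in Aij.
by move: (noi i); rewrite Eij eqxx.
Qed.

Definition edge_path (a a' : 'I_m) : config m := fun z =>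
  match z with
  | Posz 0 => a
  | Posz k.+1 => iter k (next_state A) a'
  | Negz k => iter k.+1 (prev_state A) a
  end.

Lemma edge_pathP a a' : A a a' = 1 ->
  exists x, [/\ inX A x, x 0 = a & x 1 = a'].
Proof.
move=> Aaa'; exists (edge_path a a'); split=> // -[[|k]|[|k]].
- by [].
- have -> : Posz k.+1 + 1 = Posz k.+2 by lia.
  by rewrite /= next_stateP.
- by rewrite /= prev_stateP.
- have -> : Negz k.+1 + 1 = Negz k by rewrite !NegzE; lia.
  by rewrite /= prev_stateP.
Qed.

End Paths.

Lemma inX_translate m (A : 'M[int]_m) (x : config m) (k : int) :
  inX A x -> inX A (fun i => x (i + k)).
Proof. by move=> Xx l; rewrite addrAC. Qed.

Lemma inX_splice m (A : 'M[int]_m) (x z : config m) (k : int) :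
  inX A x -> inX A z -> x k = z k ->
  inX A (fun i => if i <= k then x i else z i).
Proof.
move=> Xx Xz xzk l /=.
case: (ltrgtP l k) => [lk | kl | ->].
- have -> : l + 1 <= k by lia.
  exact: Xx.
- have -> : (l + 1 <= k) = false by lia.
  exact: Xz.
- have -> : (k + 1 <= k) = false by lia.
  by rewrite xzk; apply: Xz.
Qed.

Lemma mul_rel_mx p q r (P : 'I_p -> 'I_q -> bool) (Q : 'I_q -> 'I_r -> bool)
    (C : 'M[int]_(p, r)) (f : 'I_p -> 'I_r -> 'I_q) :
  zero_one C ->
  (forall a c, C a c = 1 -> P a (f a c) && Q (f a c) c) ->
  (forall a b c, P a b -> Q b c -> C a c = 1 /\ f a c = b) ->
  \matrix_(a, b) (if P a b then 1 else 0) *m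
    \matrix_(b, c) (if Q b c then 1 else 0) = C.
Proof.
move=> zC PQ_of_C C_of_PQ; apply/matrixP => a c; rewrite !mxE.
rewrite (bigD1 (f a c)) //= big1 ?addr0 => [|b /negPf fb]; rewrite !mxE.
  case: (zC a c) => Cac; last by have /andP [-> ->] := PQ_of_C a c Cac.
  case Pa: (P a _); case Qc: (Q _ c); rewrite ?mul0r ?mulr0 //.
  by have [] := C_of_PQ _ _ _ Pa Qc; rewrite Cac.
case Pab: (P a b); case Qbc: (Q b c); rewrite ?mul0r ?mulr0 //.
by have [_ fab] := C_of_PQ _ _ _ Pab Qbc; rewrite -fab eqxx in fb.
Qed.

Definition out_label m n (A : 'M[int]_m) (L : 'I_m -> 'I_m -> 'I_n) a b :=
  [exists a' : 'I_m, (A a a' == 1) && (L a a' == b)].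

Record elementary_pair m n (A : 'M[int]_m) (B : 'M[int]_n)
    (phi : config m -> config n) (psi : config n -> config m)
    (philoc : 'I_m -> 'I_m -> 'I_n) (psiloc : 'I_n -> 'I_n -> 'I_m) : Prop :=
  ElementaryPair {
    phi_inX : forall x, inX A x -> inX B (phi x);
    psi_inX : forall y, inX B y -> inX A (psi y);
    phiK : forall x, inX A x -> forall i, psi (phi x) i = x i;
    psiK : forall y, inX B y -> forall i, phi (psi y) i = y i;
    phi_loc : forall x, inX A x -> forall i, phi x i = philoc (x i) (x (i + 1));
    psi_loc : forall y, inX B y -> forall i, psi y i = psiloc (y (i - 1)) (y i)
  }.

Lemma elementary_pair_sym m n (A : 'M[int]_m) (B : 'M[int]_n) phi psi
    philoc psiloc :
  elementary_pair A B phi psi philoc psiloc ->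
  elementary_pair B A (fun y i => psi y (i + 1)) (fun x i => phi x (i - 1))
    psiloc philoc.
Proof.
case=> phiX psiX phiK psiK phiE psiE; split=> [y Yy | x Xx | y Yy i | x Xx i |
  y Yy i | x Xx i] /=.
- exact/inX_translate/psiX.
- exact/inX_translate/phiX.
- have Xs : inX A (fun j => psi y (j + 1)) by exact/inX_translate/psiX.
  by rewrite phiE //= subrK -phiE ?psiK //; apply: psiX.
- have Ys : inX B (fun j => phi x (j - 1)) by exact/inX_translate/phiX.
  by rewrite psiE //= addrK -psiE ?phiK //; apply: phiX.
- by rewrite psiE // addrK.
- by rewrite phiE // subrK.
Qed.

Section ElementaryPairTheory.
Variables (m n : nat) (A : 'M[int]_m) (B : 'M[int]_n).
Variables (phi : config m -> config n) (psi : config n -> config m).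
Variables (philoc : 'I_m -> 'I_m -> 'I_n) (psiloc : 'I_n -> 'I_n -> 'I_m).
Hypotheses (zA : zero_one A) (zB : zero_one B).
Hypotheses (nA : nondeg_mx A) (nB : nondeg_mx B).
Hypothesis codes : elementary_pair A B phi psi philoc psiloc.

Lemma out_labels_of_edge a c : A a c = 1 ->
  out_label A philoc a (philoc a c) && out_label B psiloc (philoc a c) c.
Proof.
move=> Aac; have [x [Xx x0 x1]] := edge_pathP zA nA Aac.
have Yy := phi_inX codes Xx.
have y0 : phi x 0 = philoc a c by rewrite (phi_loc codes) // add0r x0 x1.
apply/andP; split; apply/existsP; first by exists c; rewrite Aac !eqxx.
have y01 : B (phi x 0) (phi x 1) = 1 by have := Yy 0; rewrite add0r.
have c1 : psiloc (phi x 0) (phi x 1) = c.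
  by rewrite -x1 -(phiK codes Xx) (psi_loc codes Yy) subrr.
by exists (phi x 1); rewrite -y0 y01 c1 !eqxx.
Qed.

Lemma edge_of_out_labels a b c :
  out_label A philoc a b -> out_label B psiloc b c ->
  A a c = 1 /\ philoc a c = b.
Proof.
case/existsP=> a' /andP [/eqP Aaa' /eqP ab].
case/existsP=> b' /andP [/eqP Bbb' /eqP bc].
have [x [Xx x0 x1]] := edge_pathP zA nA Aaa'.
have [z [Zz z0 z1]] := edge_pathP zB nB Bbb'.
have y0 : phi x 0 = b by rewrite (phi_loc codes) // add0r x0 x1.
have Ww := inX_splice (phi_inX codes Xx) Zz (etrans y0 (esym z0)).
set w := fun i => _ in Ww.
have w0 : w 0 = b by rewrite /w /=.
(* psi has memory one, so at time 0 it only reads the phi x half of w. *)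
have u0 : psi w 0 = a.
  rewrite (psi_loc codes) // /w /= -(psi_loc codes (phi_inX codes Xx)).
  by rewrite (phiK codes).
have u1 : psi w 1 = c by rewrite (psi_loc codes) // subrr w0 /w /= z1.
split; first by have := psi_inX codes Ww 0; rewrite add0r u0 u1.
have := psiK codes Ww 0.
by rewrite (phi_loc codes (psi_inX codes Ww)) add0r u0 u1 w0.
Qed.

Lemma mulmx_Rmat_Smat : Rmat A philoc *m Smat B psiloc = A.
Proof.
apply: (mul_rel_mx (f := philoc) zA out_labels_of_edge) => a b c Rab Sbc.
by have [Aac <-] := edge_of_out_labels Rab Sbc.
Qed.

End ElementaryPairTheory.

Theorem mainTheorem9 (m n : nat) (A : 'M[int]_m) (B : 'M[int]_n)
  (phi : config m -> config n) (psi : config n -> config m)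
  (philoc : 'I_m -> 'I_m -> 'I_n) (psiloc : 'I_n -> 'I_n -> 'I_m) :
  zero_one A -> zero_one B -> nondeg_mx A -> nondeg_mx B ->
  conjugacy A B phi psi ->
  elementary_rules A B phi psi philoc psiloc ->
  Rmat A philoc *m Smat B psiloc = A /\ Smat B psiloc *m Rmat A philoc = B.
Proof.
move=> zA zB nA nB [phiX [psiX [phiK [psiK _]]]] [phiE psiE].
have codes := ElementaryPair phiX psiX phiK psiK phiE psiE.
split; first exact: mulmx_Rmat_Smat zA zB nA nB codes.
(* By definition [Smat B psiloc = Rmat B psiloc] and
   [Rmat A philoc = Smat A philoc]. *)
exact: mulmx_Rmat_Smat zB zA nB nA (elementary_pair_sym codes).
Qed.
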